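(* Let $f\in C^\infty(\mathbb{R})$ be real-valued, let $a\in\mathbb{R}$ and $g=(aI+\frac{d}{dx})f$, i.e. $g=af+f'$. Then $D^-(N_g,m_g)\ge D^-(N_f,m_f)$. Moreover, for $N\ge2$ and real-valued $f\in C^{N-1}(\mathbb{R})$, the same inequality holds when $m_f$ is replaced by the multiplicity function of the zeros of $f$ of height at most $N$ and $m_g$ by the multiplicity function of the zeros of $g$ of height at most $N-1$.
   Context: For a function $h$, $N_h$ is its set of real zeros and $m_h(x)=\sup\{m:h^{(j)}(x)=0\text{ for }0\le j<m\}$ its multiplicity function. For $h\in C^{K-1}(\mathbb{R})$, the multiplicity function of zeros of height at most $K$ is $x\mapsto\max\{m\le K:h^{(j)}(x)=0\text{ for }0\le j<m\}$. $D^-(N,m)=\liminf_{r\to\infty}\inf_{x\in\mathbb{R}}\frac{1}{2r}\sum_{\lambda\in N\cap[x-r,x+r]}m(\lambda)$. *)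

From HB Require Import structures.
From mathcomp Require Import all_boot all_order all_algebra.
From mathcomp Require Import all_classical all_reals all_analysis.
Set Implicit Arguments. Unset Strict Implicit. Unset Printing Implicit Defensive.
Import Order.TTheory GRing.Theory Num.Theory.
Import numFieldNormedType.Exports.
Local Open Scope classical_set_scope.
Local Open Scope ring_scope.

Section Defs.
Variable R : realType.

Definition smooth (f : R -> R) : Prop :=
  forall (n : nat) (x : R), derivable (derive1n n f) x 1.

Definition Ck (k : nat) (f : R -> R) : Prop :=
  (forall (j : nat) (x : R), (j < k)%N -> derivable (derive1n j f) x 1) /\
  continuous (derive1n k f).

Definition zeros (h : R -> R) : set R := [set x | h x = 0].

Definition mult (h : R -> R) (x : R) : \bar R :=
  ereal_sup [set (m%:R)%:E | m in
     [set m : nat | forall j : nat, (j < m)%N -> derive1n j h x = 0]].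

Definition mult_le (K : nat) (h : R -> R) (x : R) : \bar R :=
  ereal_sup [set (m%:R)%:E | m in
     [set m : nat | (m <= K)%N /\ forall j : nat, (j < m)%N -> derive1n j h x = 0]].

Definition window_count (N : set R) (m : R -> \bar R) (r x : R) : \bar R :=
  ((2 * r)^-1)%:E * (esum (N `&` [set y : R | (x - r <= y <= x + r)%R]) m).

(* D^-(N,m) = liminf_{r -> oo} inf_x (1/2r) sum ... ,
   with liminf_{r->oo} phi(r) = sup_{r0} inf_{r >= r0} phi(r). *)
Definition lower_density (N : set R) (m : R -> \bar R) : \bar R :=
  ereal_sup [set ereal_inf [set ereal_inf [set window_count N m r x | x in setT]
                           | r in [set r : R | r0 <= r]]
            | r0 in [set r0 : R | 0 < r0]].

End Defs.

From mathcomp Require Import all_boot all_order all_algebra.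
From mathcomp Require Import all_classical all_reals all_analysis.
From mathcomp Require Import ring lra.
Import Order.TTheory GRing.Theory Num.Theory.
Import numFieldNormedType.Exports.
Set Implicit Arguments.
Unset Strict Implicit.
Local Open Scope classical_set_scope.
Local Open Scope ring_scope.

(* The identity (e^{ax} f)' = e^{ax} (a f + f') and Rolle's theorem put a zero
   of g = a f + f' strictly between any two zeros of f, while
   g^(j) = a f^(j) + f^(j+1) shows that a zero of f of multiplicity m is a zero
   of g of multiplicity at least m - 1.  Listing the zeros of f in a window in
   increasing order, each loses at most one unit of multiplicity, but each of
   the gaps between consecutive ones contributes a fresh zero of g; so the
   f-count of the window exceeds the g-count by at most 1, which is negligible
   after division by the length 2r. *)

Section TwistedDerivative.
Variables (R : realType) (a : R).

(* The paper's (aI + d/dx) f; it equals e^{-ax} (e^{ax} f)'. *)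
Definition twisted_derive1 (f : R -> R) : R -> R := fun x => a * f x + derive1 f x.

Lemma is_derive_expR_mul (f : R -> R) (x : R) : derivable f x 1 ->
  is_derive x 1 (fun y => expR (a * y) * f y) (expR (a * x) * twisted_derive1 f x).
Proof.
move=> /derivableP df.
have dlin : is_derive x 1 ( *%R a) a.
  by rewrite -[X in is_derive _ _ _ X]mulr1; apply: is_deriveZ.
have dexp := is_derive1_comp (is_derive_expR (a * x)) dlin.
apply: is_derive_eq (is_deriveM dexp df) _.
by rewrite /twisted_derive1 derive1E /= /GRing.scale /=; ring.
Qed.

Lemma twisted_derive1_root_between (f : R -> R) (u v : R) :
  (forall x, derivable f x 1) -> u < v -> f u = 0 -> f v = 0 ->
  exists2 t, u < t < v & twisted_derive1 f t = 0.
Proof.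
move=> df uv fu fv.
pose h y := expR (a * y) * f y.
have dh x := is_derive_expR_mul (df x : derivable f x 1).
have hcont : {within `[u, v], continuous h}.
  by apply: derivable_within_continuous => x _; case: (dh x).
have [t tuv dht] : exists2 t, t \in `]u, v[ & is_derive t 1 h 0.
  by apply: Rolle => //; rewrite /h fu fv !mulr0.
exists t; first by rewrite in_itv in tuv.
have : 'D_1 h t = 0 by apply: derive_val.
case: (dh t) => _ ->; move/eqP.
by rewrite mulf_eq0 gt_eqF ?expR_gt0 //= => /eqP.
Qed.

Lemma derive1n_twisted (f : R -> R) (K : nat) :
  (forall j x, (j < K)%N -> derivable (derive1n j f) x 1) ->
  forall j, (j < K)%N ->
  derive1n j (twisted_derive1 f) = fun x => a * derive1n j f x + derive1n j.+1 f x.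
Proof.
move=> df; elim=> [//|j IH] jK.
rewrite derive1nS IH ?(ltnW jK) //; apply/funext => x.
rewrite [derive1n j.+2 f]derive1nS [derive1n j.+1 f]derive1nS !derive1E.
have /derivableP dj := df j x (ltnW jK).
have /derivableP dj1 := df j.+1 x jK.
have := is_deriveD (is_deriveZ a dj) dj1.
by rewrite -derive1nS; case.
Qed.

End TwistedDerivative.

Section Multiplicity.
Variable R : realType.

Definition vanishes_upto (h : R -> R) (x : R) (m : nat) : Prop :=
  forall j, (j < m)%N -> derive1n j h x = 0.

Lemma vanishes_upto_twisted (a : R) (f : R -> R) (K m : nat) (x : R) :
  (forall j y, (j < K)%N -> derivable (derive1n j f) y 1) -> (m <= K)%N ->
  vanishes_upto f x m.+1 -> vanishes_upto (twisted_derive1 a f) x m.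
Proof.
move=> df mK fx j jm.
by rewrite (derive1n_twisted a df (leq_trans jm mK)) (fx j (ltnW jm)) (fx j.+1 jm) mulr0 addr0.
Qed.

Local Open Scope ereal_scope.

Definition nat_sup (A : set nat) : \bar R := ereal_sup [set m%:R%:E | m in A].

Lemma nat_sup_ub (A : set nat) (n : nat) : A n -> n%:R%:E <= nat_sup A.
Proof. by move=> An; apply: ereal_sup_ubound; exists n. Qed.

Lemma nat_sup_le0 (A : set nat) : (forall m, A m -> m = 0%N) -> nat_sup A <= 0.
Proof. by move=> A0; apply: ge_ereal_sup => _ [m /A0 -> <-]. Qed.

Lemma nat_sup_le_succ (A B : set nat) :
  B 0%N -> (forall m, A m.+1 -> B m) -> nat_sup A <= nat_sup B + 1.
Proof.
move=> B0 AB; apply: ge_ereal_sup => _ [[|m] Am <-].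
  by apply: adde_ge0 => //; apply: (nat_sup_ub B0).
by rewrite -natr1 EFinD; apply: leeD2r; apply: nat_sup_ub; apply: AB.
Qed.

Lemma multE (h : R -> R) (x : R) : mult h x = nat_sup (vanishes_upto h x).
Proof. by []. Qed.

Lemma mult_leE (K : nat) (h : R -> R) (x : R) :
  mult_le K h x = nat_sup (fun m => (m <= K)%N /\ vanishes_upto h x m).
Proof. by []. Qed.

Lemma mult_ge0 (h : R -> R) (x : R) : 0 <= mult h x.
Proof. by rewrite multE; apply: (@nat_sup_ub _ 0). Qed.

Lemma mult_ge1 (h : R -> R) (x : R) : zeros h x -> 1 <= mult h x.
Proof. by move=> hx; rewrite multE; apply: (@nat_sup_ub _ 1) => -[]. Qed.

Lemma mult_eq0 (h : R -> R) (x : R) : ~ zeros h x -> mult h x = 0.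
Proof.
move=> hx; apply/eqP; rewrite eq_le mult_ge0 andbT multE.
by apply: nat_sup_le0 => -[//|m] /(_ 0%N isT).
Qed.

Lemma mult_le_ge0 (K : nat) (h : R -> R) (x : R) : 0 <= mult_le K h x.
Proof. by rewrite mult_leE; apply: (@nat_sup_ub _ 0). Qed.

Lemma mult_le_ge1 (K : nat) (h : R -> R) (x : R) :
  (0 < K)%N -> zeros h x -> 1 <= mult_le K h x.
Proof. by move=> K0 hx; rewrite mult_leE; apply: (@nat_sup_ub _ 1); split => // -[]. Qed.

Lemma mult_le_eq0 (K : nat) (h : R -> R) (x : R) : ~ zeros h x -> mult_le K h x = 0.
Proof.
move=> hx; apply/eqP; rewrite eq_le mult_le_ge0 andbT mult_leE.
by apply: nat_sup_le0 => -[//|m] [_ /(_ 0%N isT)].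
Qed.

Lemma mult_twisted (a : R) (f : R -> R) (x : R) :
  smooth f -> mult f x <= mult (twisted_derive1 a f) x + 1.
Proof.
move=> sf; rewrite !multE; apply: nat_sup_le_succ => // m.
by apply: (@vanishes_upto_twisted _ _ m) => // j y _; apply: sf.
Qed.

Lemma mult_le_twisted (N : nat) (a : R) (f : R -> R) (x : R) :
  (forall j y, (j < N.-1)%N -> derivable (derive1n j f) y 1) ->
  mult_le N f x <= mult_le N.-1 (twisted_derive1 a f) x + 1.
Proof.
move=> df; rewrite !mult_leE; apply: nat_sup_le_succ => [|m [mN fx]]; first by split.
have mN1 : (m <= N.-1)%N by rewrite -ltnS (leq_trans mN) ?leqSpred.
by split; last exact: vanishes_upto_twisted df mN1 fx.
Qed.

End Multiplicity.

Section LowerDensity.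
Variables (R : realType) (Zf Zg : set R) (mf mg : R -> \bar R) (C : R).
Local Open Scope ereal_scope.
Hypothesis C_ge0 : (0 <= C)%R.
Hypothesis mg_ge0 : forall x, 0 <= mg x.
Hypothesis esum_interval_le : forall c d : R,
  esum (Zf `&` [set y | (c <= y <= d)%R]) mf
  <= esum (Zg `&` [set y | (c <= y <= d)%R]) mg + C%:E.

Lemma window_count_le (r x : R) : (0 < r)%R ->
  window_count Zf mf r x <= window_count Zg mg r x + (C / (2 * r))%:E.
Proof.
move=> r0; rewrite /window_count.
have r2_ge0 : 0 <= ((2 * r)^-1)%:E by rewrite lee_fin invr_ge0 mulr_ge0 // ltW.
apply: le_trans (lee_wpmul2l r2_ge0 (esum_interval_le _ _)) _.
rewrite ge0_muleDr ?lee_fin //; last exact: esum_ge0.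
by rewrite -EFinM (mulrC C).
Qed.

Lemma lower_density_le : lower_density Zf mf <= lower_density Zg mg.
Proof.
apply: ge_ereal_sup => _ [r0 /= r00 <-].
apply/lee_addgt0Pr => e e0.
pose r1 := Num.max r0 (C / e)%R.
apply: (@le_trans _ _ (ereal_inf [set ereal_inf [set window_count Zg mg r x | x in setT]
    | r in [set r | (r1 <= r)%R]] + e%:E)); last first.
  by apply: leeD2r; apply: ereal_sup_ubound; exists r1 => //=; rewrite lt_max r00.
rewrite -leeBlDr //; apply: le_ereal_inf_tmp => _ [r /= r1r <-].
apply: le_ereal_inf_tmp => _ [x _ <-].
have [r0r Cer] : (r0 <= r)%R /\ (C / e <= r)%R by apply/andP; rewrite -ge_max.
have r_gt0 : (0 < r)%R := lt_le_trans r00 r0r.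
rewrite EFinN leeBlDr //.
apply: (@le_trans _ _ (window_count Zf mf r x)).
  apply: (@le_trans _ _ (ereal_inf [set window_count Zf mf r y | y in setT])).
    by apply: ereal_inf_lbound; exists r.
  by apply: ereal_inf_lbound; exists x.
apply: le_trans (window_count_le x r_gt0) _.
apply: leeD2l; rewrite lee_fin ler_pdivrMr ?mulr_gt0 //.
move: Cer; rewrite ler_pdivrMr // => Cre; nra.
Qed.

End LowerDensity.

Lemma esum_setI_support (R : realType) (T : choiceType) (S D : set T) (m : T -> \bar R) :
  (forall x, ~ S x -> m x = 0%E) -> esum (S `&` D) m = esum D m.
Proof.
move=> m0; rewrite esum_mkcondl; apply: eq_esum => x _.
by case: ifPn => // /negP; rewrite in_setE => /m0.
Qed.

Section Interlacing.
Variables (R : realType) (Zf : set R) (mf mg : R -> \bar R).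
Local Open Scope ereal_scope.
Hypothesis mg_ge0 : forall x, 0 <= mg x.
Hypothesis mf_le : forall x, Zf x -> mf x <= mg x + 1.
Hypothesis interlacing : forall u v, Zf u -> Zf v -> (u < v)%R ->
  exists2 t, (u < t < v)%R & 1 <= mg t.

Lemma sum_sorted_le (s : seq R) (x0 d : R) : sorted <%R s -> s != [::] ->
  (forall x, x \in s -> Zf x /\ (x <= d)%R) ->
  exists T : seq R, [/\ uniq T, forall y, y \in T -> (head x0 s <= y <= d)%R &
    \sum_(x <- s) mf x <= \sum_(y <- T) mg y + 1].
Proof.
elim: s => [//|x s IH] /= s_sorted _ s_in.
have [Zx xd] := s_in x (mem_head _ _).
case: s IH s_sorted s_in => [|y s] IH.
  move=> _ _; exists [:: x]; split=> // [z|]; first by rewrite inE => /eqP ->; rewrite lexx.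
  by rewrite !big_seq1; apply: mf_le.
move=> /andP[xy ys_sorted] s_in.
have ys_in z : z \in y :: s -> Zf z /\ (z <= d)%R.
  by move=> zin; apply: s_in; rewrite inE zin orbT.
have [T [T_uniq T_in T_sum]] := IH ys_sorted isT ys_in.
have [Zy yd] := ys_in y (mem_head _ _).
have [t /andP[xt ty] mgt] := interlacing Zx Zy xy.
have T_gt : forall z, z \in T -> (t < z)%R && (x < z)%R.
  by move=> z /T_in /andP[yz _]; rewrite (lt_le_trans ty yz) (lt_le_trans xy yz).
exists [:: t, x & T]; split.
- rewrite /= T_uniq inE negb_or gt_eqF //= andbT.
  by apply/andP; split; apply/negP => /T_gt /andP[]; rewrite ltxx.
- move=> z; rewrite !inE => /orP[/eqP->|/orP[/eqP->|/T_in/andP[yz zd]]].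
  + by rewrite (ltW xt) (le_trans (ltW ty) yd).
  + by rewrite lexx.
  + by rewrite zd (le_trans (ltW xy)).
- rewrite big_cons; apply: le_trans (leeD (mf_le Zx) T_sum) _.
  rewrite !big_cons addeACA (addeC (mg t)) -[in X in _ <= X]addeA.
  by apply: leeD2l; apply: leeD2r.
Qed.

Lemma esum_interval_le (c d : R) :
  esum (Zf `&` [set y | (c <= y <= d)%R]) mf <= esum [set y | (c <= y <= d)%R] mg + 1.
Proof.
apply: ge_ereal_sup => _ [X [X_fin X_sub] <-].
rewrite fsbig_finite //=.
set s := sort <=%R (finmap.enum_fset (fset_set X)).
rewrite (perm_big s) 1?perm_sym ?perm_sort //.
have s_sorted : sorted <%R s by rewrite sort_lt_sorted finmap.fset_uniq.
have s_in x : x \in s -> (Zf `&` [set y | (c <= y <= d)%R]) x.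
  by rewrite mem_sort in_fset_set // in_setE => /X_sub.
have [->|s_nil] := eqVneq s [::].
  by rewrite big_nil adde_ge0 // esum_ge0.
have c_head : (c <= head c s)%R.
  by case: s s_in s_nil {s_sorted} => // h s' /(_ h (mem_head _ _)) [_ /andP[]].
have s_le_d x : x \in s -> Zf x /\ (x <= d)%R by move=> /s_in [Zx /andP[_ xd]].
have [T [T_uniq T_in T_sum]] := sum_sorted_le c s_sorted s_nil s_le_d.
apply: le_trans T_sum _; apply: leeD2r.
apply: esum_ge; exists [set` T]; last by rewrite fsbig_seq.
split; first exact: finite_seq.
by move=> y /T_in /andP[hy yd]; rewrite /= yd andbT (le_trans c_head hy).
Qed.

Lemma lower_density_le_interlacing (Zg : set R) :
  (forall x, ~ Zg x -> mg x = 0) -> lower_density Zf mf <= lower_density Zg mg.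
Proof.
move=> mg_supp; apply: (lower_density_le (C := 1)) => // c d.
by rewrite (esum_setI_support _ mg_supp); apply: esum_interval_le.
Qed.

End Interlacing.

Theorem lemma4p8 (R : realType) :
  (forall (f : R -> R) (a : R), smooth f ->
     let g := fun x => a * f x + derive1 f x in
     (lower_density (zeros f) (mult f) <= lower_density (zeros g) (mult g))%E)
  /\
  (forall (N : nat), (2 <= N)%N ->
   forall (f : R -> R) (a : R), Ck N.-1 f ->
     let g := fun x => a * f x + derive1 f x in
     (lower_density (zeros f) (mult_le N f)
        <= lower_density (zeros g) (mult_le N.-1 g))%E).
Proof.
split=> [f a sf | N N2 f a [df _]] /=.
- apply: lower_density_le_interlacing.
  + exact: mult_ge0.
  + by move=> x _; apply: mult_twisted.
  + move=> u v fu fv uv.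
    have [t tuv gt] := twisted_derive1_root_between a (fun x => sf 0%N x) uv fu fv.
    by exists t => //; apply: mult_ge1.
  + exact: mult_eq0.
- have N1 : (0 < N.-1)%N by rewrite -ltnS prednK // ltnW.
  apply: lower_density_le_interlacing.
  + exact: mult_le_ge0.
  + by move=> x _; apply: mult_le_twisted.
  + move=> u v fu fv uv.
    have [t tuv gt] := twisted_derive1_root_between a (fun x => df 0%N x N1) uv fu fv.
    by exists t => //; apply: mult_le_ge1.
  + exact: mult_le_eq0.
Qed.
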